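(* Let $(\Theta,\mathcal{B},\mu,\omega)$ be an ergodic metric dynamical system and let $\Psi:\mathbb{R}\times\Theta\times\mathbb{R}\to\Theta\times\mathbb{R}$, $(t,\theta,x)\mapsto(\theta\cdot t,\psi_t(\theta,x))$, be a measurable map satisfying the cocycle property $\psi_{t_1+t_2}(\theta,x)=\psi_{t_2}(\theta\cdot t_1,\psi_{t_1}(\theta,x))$ for all $t_1,t_2\in\mathbb{R}$, $\theta\in\Theta$, $x\in\mathbb{R}$. Assume: (i) $\psi_t(\theta,x+1)=\psi_t(\theta,x)+1$ for all $(t,\theta,x)\in\mathbb{R}\times\Theta\times\mathbb{R}$; (ii) there is a constant $C\ge0$ such that $\psi_t(\theta,x)\le\psi_t(\theta,x')+C$ for all $t\in\mathbb{R}$, $\theta\in\Theta$ and $x,x'\in\mathbb{R}$ with $x\le x'$; (iii) there is a constant $\eta\ge0$ such that $|\psi_t(\theta,x)-x|\le\eta$ for all $(t,\theta,x)\in[0,1]\times\Theta\times\mathbb{R}$. Then there exist a real number $\rho$ and a set $\Theta_0\subseteq\Theta$ with $\mu(\Theta_0)=1$ such that $$\lim_{t\to\infty}\frac{\psi_t(\theta,x)-x}{t}=\rho\quad\text{for all }(\theta,x)\in\Theta_0\times\mathbb{R}.$$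
   Context: A metric dynamical system $(\Theta,\mathcal{B},\mu,\omega)$ consists of a probability space $(\Theta,\mathcal{B},\mu)$ and a measurable flow $\omega:\mathbb{R}\times\Theta\to\Theta$, written $\omega_t(\theta)=\theta\cdot t$, with $\mu\circ\omega_t^{-1}=\mu$ for all $t\in\mathbb{R}$; it is ergodic if every invariant measurable set has measure $0$ or $1$. *)

From HB Require Import structures.
From mathcomp Require Import all_boot all_order all_algebra.
From mathcomp Require Import all_classical all_reals all_analysis.
Set Implicit Arguments. Unset Strict Implicit. Unset Printing Implicit Defensive.
Import Order.TTheory GRing.Theory Num.Theory.
Import numFieldNormedType.Exports.
Local Open Scope classical_set_scope.
Local Open Scope ring_scope.

(* A metric dynamical system (Theta, B, mu, omega): mu is a probability measure
   on the measurable type T, w : R -> T -> T is a measurable flow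
   (w t th = th . t), jointly measurable in (t, th), with w 0 = id,
   w (s + t) = w t \o w s, and mu preserved by every w t. *)
Definition metric_dynamical_system (R : realType) (d : measure_display)
  (T : measurableType d) (mu : probability T R) (w : R -> T -> T) : Prop :=
  [/\ measurable_fun setT (fun p : R * T => w p.1 p.2),
      (forall th, w 0 th = th),
      (forall s t th, w (s + t) th = w t (w s th)) &
      (forall t A, measurable A -> mu (w t @^-1` A) = mu A)].

Definition ergodic_mds (R : realType) (d : measure_display)
  (T : measurableType d) (mu : probability T R) (w : R -> T -> T) : Prop :=
  metric_dynamical_system mu w /\
  forall A : set T, measurable A -> (forall t, w t @^-1` A = A) ->
    mu A = 0%E \/ mu A = 1%E.

(** Write G_t(θ) := ψ_t(θ, 0).  By (i) and (ii), ψ_t(θ, x) - x stays within C + 1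
    of G_t(θ), so the cocycle property turns G into a quasi-additive cocycle over the
    flow, |G_{a+b}(θ) - G_a(θ) - G_b(θ·a)| <= C + 1, and (iii) bounds its increments
    over unit times.  For each q the set of θ with limsup_n G_n(θ)/n < q is invariant
    under the flow, hence has measure 0 or 1; its threshold L⁺ is the essential upper
    growth rate of G, and L⁻ is that of -G.  A Katznelson-Weiss covering argument
    shows L⁺ + L⁻ <= 0: cut an orbit segment greedily into windows along which G grows
    at rate almost L⁺ (and likewise -G at rate almost L⁻); the times starting no such
    window are rare on some orbit because μ is invariant, and summing both bounds
    gives a contradiction otherwise.  Hence G_n/n -> L⁺ almost surely, and (iii) and
    (ii) carry this over to real times and to every starting point x. *)

From HB Require Import structures.
From mathcomp Require Import all_boot all_order all_algebra.
From mathcomp Require Import all_classical all_reals all_analysis.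
From mathcomp Require Import ring lra zify measurable_realfun.
Set Implicit Arguments. Unset Strict Implicit. Unset Printing Implicit Defensive.
Import Order.TTheory GRing.Theory Num.Theory.
Import numFieldNormedType.Exports.
Local Open Scope classical_set_scope.
Local Open Scope ring_scope.

Section degree_one_lift.
Variables (R : realType) (f : R -> R) (C : R).
Hypothesis f_add1 : forall x, f (x + 1) = f x + 1.
Hypothesis f_quasi_mono : forall x y, x <= y -> f x <= f y + C.

Lemma lift_addn x (n : nat) : f (x + n%:R) = f x + n%:R.
Proof.
by elim: n => [|n IH]; rewrite ?addr0 // -natr1 addrA f_add1 IH addrA.
Qed.

Lemma lift_addz x (z : int) : f (x + z%:~R) = f x + z%:~R.
Proof.
case: z => n; first exact: lift_addn.
rewrite NegzE mulrNz; have := lift_addn (x - n.+1%:R) n.+1.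
by rewrite subrK => ->; ring.
Qed.

Lemma lift_displacement y : `|f y - y - f 0| <= C + 1.
Proof.
have /andP[fl_le lt_fl1] := floor_itv y; rewrite intrD in lt_fl1.
set r := y - (Num.floor y)%:~R.
have -> : y = r + (Num.floor y)%:~R by rewrite /r subrK.
rewrite lift_addz.
have r0 : 0 <= r by rewrite /r subr_ge0.
have r1 : r <= 1 by rewrite /r; lra.
have := f_quasi_mono r0; have := f_quasi_mono r1.
rewrite -[1]add0r f_add1 add0r => hr1 h0r.
rewrite ler_norml; apply/andP; split; lra.
Qed.

End degree_one_lift.

Lemma exists_divn_le (R : realType) (x e : R) : 0 < e ->
  exists n : nat, x / n.+1%:R <= e.
Proof.
move=> e0; exists (Num.bound (`|x| / e)).
have nS0 : (0 : R) < (Num.bound (`|x| / e)).+1%:R by rewrite ltr0n.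
rewrite ler_pdivrMr // (le_trans (ler_norm x)) // -ler_pdivrMl //.
have x0 : 0 <= `|x| / e by rewrite divr_ge0 // ltW.
rewrite mulrC; apply/ltW/(lt_le_trans (archi_boundP x0)); by rewrite ler_nat leqnSn.
Qed.

Lemma le_of_linear_le (R : realType) (a b K : R) :
  (forall M : nat, (0 < M)%N -> a * M%:R <= b * M%:R + K) -> a <= b.
Proof.
move=> hM; rewrite leNgt; apply/negP => ba.
have hab : 0 < (a - b) / 2 by rewrite divr_gt0 // subr_gt0.
have [n hn] := exists_divn_le K hab.
have := hM n.+1 isT; have n0 : (0 : R) < n.+1%:R by rewrite ltr0n.
move: hn; rewrite ler_pdivrMr //; set m := n.+1%:R in n0 *.
have : 0 < (a - b) * m by rewrite mulr_gt0 // subr_gt0.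
nra.
Qed.

(* Halving the margin absorbs the constant c once n is large. *)
Lemma rate_margin_perturb (R : realType) (u v : nat -> R) (q c : R) (j k : nat) :
  (forall n, (0 < n)%N -> v n <= u n + c) ->
  (forall n, (k <= n)%N -> u n <= n%:R * (q - j.+1%:R^-1)) ->
  exists j' k', forall n, (k' <= n)%N -> v n <= n%:R * (q - j'.+1%:R^-1).
Proof.
move=> vu hu; have e0 : 0 < j.+1%:R^-1 :> R by rewrite invr_gt0 ltr0n.
have [m hm] := exists_divn_le (2 * `|c|) (divr_gt0 e0 (ltr0n R 2)).
exists j.*2.+1, (maxn k m.+1) => n; rewrite geq_max => /andP[kn mn].
have -> : j.*2.+2%:R^-1 = j.+1%:R^-1 / 2 :> R.
  by rewrite -invfM -natrM muln2 doubleS.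
have n0 : (0 < n)%N := leq_trans (ltn0Sn m) mn.
have : 2 * `|c| <= n%:R * (j.+1%:R^-1 / 2).
  apply: le_trans (_ : m.+1%:R * (j.+1%:R^-1 / 2) <= _); last first.
    by apply: ler_wpM2r; [rewrite divr_ge0 // ltW | rewrite ler_nat].
  by rewrite -ler_pdivrMl ?ltr0n // mulrC.
have := vu n n0; have := hu n kn; have := ler_norm c.
(* [set] merges differently elaborated copies of [j.+1%:R^-1] into one atom for lra. *)
have := normr_ge0 c; set e := j.+1%:R^-1; clearbody e; lra.
Qed.

Lemma cvg_ratio_of_nat_rate (R : realType) (f g : R -> R) (L D eta : R) :
  (forall t, `|f t - g t| <= D) ->
  (forall m s, 0 <= s <= 1 -> `|g (m + s) - g m| <= eta) ->
  (forall e, 0 < e ->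
    exists k, forall n, (k <= n)%N -> `|g n%:R - n%:R * L| <= n%:R * e) ->
  f t / t @[t --> +oo] --> L.
Proof.
move=> fg g_step g_rate; apply/cvgrPdist_le => e e0.
have [k hk] := g_rate (e / 2) (divr_gt0 e0 (ltr0n R 2)).
set K := `|D| + `|eta| + `|L|.
have K0 : 0 <= K by rewrite !addr_ge0.
exists (k%:R + 1 + 2 * K / e); split; first exact: num_real.
move=> t Kt; have Ke : 0 <= 2 * K / e by rewrite divr_ge0 ?mulr_ge0 // ltW.
have t0 : 0 < t by have : (0 : R) <= k%:R by []; lra.
have /andP[nt tn] : (Num.truncn t)%:R <= t < (Num.truncn t).+1%:R.
  by rewrite -truncn_le_nat truncn_le ltW // leqnn.
set n := Num.truncn t in nt tn.
have kn : (k <= n)%N by rewrite -(ler_nat R); move: tn; rewrite -natr1; lra.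
have s01 : 0 <= t - n%:R <= 1 by apply/andP; split; move: tn; rewrite -natr1; lra.
have := g_step n%:R _ s01; rewrite [n%:R + _]addrC subrK ler_norml => /andP[g1 g2].
have := hk n kn; rewrite ler_norml => /andP[h1 h2].
have := fg t; rewrite ler_norml => /andP[f1 f2].
have Ln : `|L * (t - n%:R)| <= `|L|.
  by rewrite normrM ler_piMr // ger0_norm ?subr_ge0 //; case/andP: s01.
rewrite ler_norml in Ln; case/andP: Ln => Ln1 Ln2.
have en : n%:R * (e / 2) <= t * (e / 2).
  by apply: ler_wpM2r => //; rewrite divr_ge0 // ltW.
have Kt' : 2 * K <= e * t.
  by move: Kt; rewrite -ler_pdivrMl // mulrC; have : (0 : R) <= k%:R by []; lra.
have -> : L - f t / t = (t * L - f t) / t by field; lra.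
rewrite normf_div (gtr0_norm t0) ler_pdivrMr // ler_norml.
have := ler_norm D; have := ler_norm eta; rewrite /K in Kt'.
by move=> *; apply/andP; split; lra.
Qed.

Lemma backward_cover_ind (P : nat -> Prop) (M N : nat) :
  (forall j, (j <= M)%N -> (M <= j + N)%N -> P j) ->
  (forall j, (j + N < M)%N -> exists2 n, (0 < n <= N)%N & (P (j + n)%N -> P j)) ->
  P 0%N.
Proof.
move=> tail step.
suff: forall r j, (M - j <= r)%N -> (j <= M)%N -> P j by apply; rewrite ?subn0.
elim=> [|r IH] j jr jM; first by apply: tail => //; lia.
have [MjN|ltjNM] := leqP M (j + N); first exact: tail.
have [n /andP[n0 nN] hn] := step j ltjNM.
by apply/hn/IH; lia.
Qed.

Section greedy_cover.
Variables (R : realType) (a : nat -> R) (h : nat -> nat -> R) (bad : nat -> R).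
Variables (D eta q : R) (k N M : nat).
Hypotheses (D0 : 0 <= D) (eta0 : 0 <= eta) (k0 : (0 < k)%N) (kN : (k <= N)%N).
Hypothesis a_superadd : forall j n, a j + h j n - D <= a (j + n)%N.
Hypothesis h_lb : forall j n, - (n.+1%:R * eta) <= h j n.
Hypothesis bad01 : forall j, bad j = 0 \/ bad j = 1.
Hypothesis good_step : forall j, bad j = 0 ->
  exists2 n, (k <= n <= N)%N & n%:R * q <= h j n.

(* A window of length n >= k started at a good time pays the defect D once, that
   is at most D / k per step. *)
Let al : R := q - D / k%:R.
Let c : R := `|al| + 2 * eta + D.
Let K : R := (`|al| + eta) * N%:R + eta + D.
Let S j : R := \sum_(j <= i < M) bad i.
Let P j := a j + al * (M%:R - j%:R) - c * S j - K <= a M.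

Let S_ge0 j : 0 <= S j.
Proof. by apply: sumr_ge0 => i _; case: (bad01 i) => ->. Qed.

Let c_ge0 : 0 <= c.
Proof. by rewrite /c !addr_ge0 ?mulr_ge0. Qed.

Let P_tail j : (j <= M)%N -> (M <= j + N)%N -> P j.
Proof.
move=> jM MjN; have := a_superadd j (M - j); have := h_lb j (M - j).
rewrite subnKC // -[(M - j).+1]addn1 natrD natrB // => hh ha.
have mN : M%:R - j%:R <= N%:R :> R by rewrite -natrB // ler_nat leq_subLR.
have m0 : 0 <= M%:R - j%:R :> R by rewrite -natrB.
have alm : al * (M%:R - j%:R) <= `|al| * N%:R.
  exact: le_trans (ler_wpM2r m0 (ler_norm al)) (ler_wpM2l (normr_ge0 al) mN).
have etam : (M%:R - j%:R + 1) * eta <= (N%:R + 1) * eta by rewrite ler_wpM2r // lerD2r.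
have cS : 0 <= c * S j by rewrite mulr_ge0 ?S_ge0 ?c_ge0.
rewrite /P /K; lra.
Qed.

Let P_good j n : (j + n <= M)%N -> (k <= n)%N -> n%:R * q <= h j n ->
  P (j + n)%N -> P j.
Proof.
move=> jnM kn hn; rewrite /P /S natrD => hP.
rewrite (@big_cat_nat _ _ _ (j + n)%N j M) ?leq_addr //=.
have Dn : D <= n%:R * (D / k%:R).
  rewrite mulrA ler_pdivlMr ?ltr0n // [n%:R * D]mulrC.
  by apply: ler_wpM2l => //; rewrite ler_nat.
have nal : n%:R * al = n%:R * q - n%:R * (D / k%:R) by rewrite /al mulrBr.
have cS : 0 <= c * \sum_(j <= i < j + n) bad i.
  by rewrite mulr_ge0 ?c_ge0 //; apply: sumr_ge0 => i _; case: (bad01 i) => ->.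
have := a_superadd j n; lra.
Qed.

Let P_bad j : (j < M)%N -> bad j = 1 -> P j.+1 -> P j.
Proof.
move=> jM bj; rewrite /P /S -addn1 natrD addn1 => hP; rewrite big_ltn // bj.
have := a_superadd j 1; have := h_lb j 1; have := ler_norm al.
have cE : c = `|al| + 2 * eta + D by [].
by rewrite addn1; lra.
Qed.

Lemma greedy_cover_bound :
  a 0%N + al * M%:R - c * \sum_(i < M) bad i - K <= a M.
Proof.
have := @backward_cover_ind P M N P_tail; rewrite /P /S subr0 big_mkord; apply.
move=> j jNM; case: (bad01 j) => bj.
  have [n /andP[kn nN] hn] := good_step bj.
  exists n; first by rewrite nN (leq_trans k0 kn).
  by apply: P_good => //; lia.
by exists 1%N; [rewrite (leq_trans k0 kN) | rewrite addn1; apply: P_bad => //; lia].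
Qed.

End greedy_cover.

Section probability_one.
Context (R : realType) (d : measure_display) (T : measurableType d).
Variable mu : probability T R.

Lemma probability_bigcap_eq1 (A : (set T)^nat) :
  (forall j, measurable (A j)) -> (forall j, mu (A j) = 1%E) ->
  mu (\bigcap_j A j) = 1%E.
Proof.
move=> mA A1.
have AC0 j : mu.-negligible (~` A j).
  exists (~` A j); split => //; first exact: measurableC.
  by rewrite probability_setC // A1 subee.
have [B [mB B0 AB]] := negligible_bigcup AC0.
have mAcap := bigcapT_measurable mA.
apply/eqP; rewrite eq_le probability_le1 //=.
rewrite -[leLHS]sube0 -B0 -probability_setC //.
apply: le_measure; rewrite ?inE //; first exact: measurableC.
by move=> x nBx j _; apply: contrapT => nAx; apply/nBx/AB; exists j.
Qed.

Lemma probability_setI_eq1 (A B : set T) : measurable A -> measurable B ->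
  mu A = 1%E -> mu B = 1%E -> mu (A `&` B) = 1%E.
Proof.
move=> mA mB A1 B1; rewrite -bigcap2E.
by apply: probability_bigcap_eq1 => -[|[|j]] //=; rewrite probability_setT.
Qed.

End probability_one.

Section orbit_visits.
Context (R : realType) (d : measure_display) (T : measurableType d).
Variables (mu : probability T R) (w : R -> T -> T).
Hypothesis w_measurable : forall t, measurable_fun setT (w t).
Hypothesis w_preserving : forall t A, measurable A -> mu (w t @^-1` A) = mu A.

Lemma integral_orbit_visits (B : set T) (M : nat) : measurable B ->
  (\int[mu]_th (\sum_(i < M) \1_B (w i%:R th) : R)%:E = \sum_(i < M) mu B)%E.
Proof.
move=> mB; have mwB i : measurable (w i @^-1` B).
  by have := w_measurable i measurableT mB; rewrite setTI.
transitivity (\int[mu]_th \sum_(i < M) (\1_(w i%:R @^-1` B) th : R)%:E)%E.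
  by apply: eq_integral => th _; rewrite sumEFin.
rewrite ge0_integral_sum //.
- by apply: eq_bigr => i _; rewrite integral_indic // setIT; exact: w_preserving.
- by move=> i; apply/measurable_EFinP/measurable_indic.
Qed.

(* Markov's inequality: by invariance the mean number of visits is M * mu B; the factor 2
   leaves room for a strict inequality. *)
Lemma exists_orbit_few_visits (B : set T) (M : nat) (beta : R) :
  measurable B -> (mu B <= beta%:E)%E -> 0 < beta -> (0 < M)%N ->
  exists th, \sum_(i < M) \1_B (w i%:R th) <= 2 * beta * M%:R.
Proof.
move=> mB muB beta0 M0; apply/not_existsP => many.
have {}many th : 2 * beta * M%:R <= \sum_(i < M) \1_B (w i%:R th).
  by apply/ltW; rewrite ltNge; apply/negP => /(conj (many th))/= [].
have : ((2 * beta * M%:R)%:E <= \sum_(i < M) mu B)%E.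
  rewrite -integral_orbit_visits // -[leLHS]mule1 -(probability_setT mu).
  rewrite -integral_cst //; apply: ge0_le_integral => //.
  - by move=> th _; rewrite lee_fin !mulr_ge0 // ltW.
  - apply/measurable_EFinP/measurable_sum => i.
    by apply: measurableT_comp; [exact: measurable_indic | exact: w_measurable].
  - by move=> th _; rewrite lee_fin.
have : (\sum_(i < M) mu B <= (M%:R * beta)%:E)%E.
  apply: le_trans (_ : \sum_(i < M) beta%:E <= _)%E; first exact: lee_sum.
  by rewrite sumEFin big_const_ord iter_addr_0 mulr_natl.
move=> /(le_trans _) h /h; rewrite lee_fin.
have : 0 < M%:R * beta :> R by rewrite mulr_gt0 // ltr0n.
lra.
Qed.

End orbit_visits.

Definition quasi_cocycle (R : realType) (T : Type) (w : R -> T -> T) (D eta : R)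
    (G : R -> T -> R) :=
  [/\ forall a b th, `|G (a + b) th - G a th - G b (w a th)| <= D,
      forall m s th, 0 <= s <= 1 -> `|G (m + s) th - G m th| <= eta &
      forall th, `|G 0 th| <= eta].

Lemma quasi_cocycleN (R : realType) (T : Type) (w : R -> T -> T) (D eta : R)
    (G : R -> T -> R) :
  quasi_cocycle w D eta G -> quasi_cocycle w D eta (fun t th => - G t th).
Proof.
case=> Gadd Gstep G0; split=> [a b th|m s th /Gstep|th]; last by rewrite normrN.
  have -> : - G (a + b) th - - G a th - - G b (w a th)
    = - (G (a + b) th - G a th - G b (w a th)) by ring.
  by rewrite normrN.
by rewrite distrC opprK addrC.
Qed.

Lemma displacement_quasi_cocycle (R : realType) (T : Type) (w : R -> T -> T)
    (psi : R -> T -> R -> R) (C eta : R) :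
  (forall t1 t2 th x, psi (t1 + t2) th x = psi t2 (w t1 th) (psi t1 th x)) ->
  (forall t th x, psi t th (x + 1) = psi t th x + 1) ->
  (forall t th x x', x <= x' -> psi t th x <= psi t th x' + C) ->
  (forall t th x, 0 <= t <= 1 -> `|psi t th x - x| <= eta) ->
  quasi_cocycle w (C + 1) eta (fun t th => psi t th 0).
Proof.
move=> cocycle add1 quasi_mono small_time; split=> [a b th|m s th s01|th].
- by rewrite cocycle; exact: (lift_displacement (add1 b _) (quasi_mono b _)).
- by rewrite cocycle; exact: small_time.
- by have := small_time 0 th 0; rewrite lexx ler01 subr0; apply.
Qed.

Section quasi_cocycle_growth.
Context (R : realType) (d : measure_display) (T : measurableType d).
Variables (mu : probability T R) (w : R -> T -> T) (D eta : R) (G : R -> T -> R).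
Hypothesis w0 : forall th, w 0 th = th.
Hypothesis wD : forall s t th, w (s + t) th = w t (w s th).
Hypothesis D_ge0 : 0 <= D.
Hypothesis eta_ge0 : 0 <= eta.
Hypothesis G_cocycle : quasi_cocycle w D eta G.
Hypothesis G_measurable : forall t, measurable_fun setT (G t).
Hypothesis w_ergodic : forall A, measurable A -> (forall t, w t @^-1` A = A) ->
  mu A = 0%E \/ mu A = 1%E.

Let G_add (a b : R) th : `|G (a + b) th - G a th - G b (w a th)| <= D.
Proof. by case: G_cocycle. Qed.

Let G_step (m s : R) th : 0 <= s <= 1 -> `|G (m + s) th - G m th| <= eta.
Proof. by case: G_cocycle => _ + _; apply. Qed.

Let G_0 th : `|G 0 th| <= eta.
Proof. by case: G_cocycle. Qed.

Lemma quasi_cocycle_nat_bound n th : `|G n%:R th| <= n.+1%:R * eta.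
Proof.
elim: n => [|n IH]; first by rewrite mul1r.
have := G_step n%:R th (s := 1).
rewrite ler01 lexx -natr1 -[n.+2]addn1 natrD => /(_ isT).
move: IH; rewrite !ler_norml => /andP[h1 h2] /andP[h3 h4].
by apply/andP; split; lra.
Qed.

Lemma quasi_cocycle_shift (t : R) th : -1 <= t <= 1 ->
  exists c, forall n, (0 < n)%N -> G n%:R (w t th) <= G n%:R th + c.
Proof.
move=> /andP[t1 t2]; exists (2 * eta + `|G t th| + D) => n n0.
have := G_add t n%:R th; rewrite ler_norml => /andP[h1 _].
have hGt : - G t th <= `|G t th| by rewrite -normrN ler_norm.
have [t0|t0] := lerP 0 t.
  have := G_step n%:R th (s := t).
  rewrite t0 t2 [n%:R + t]addrC ler_norml => /(_ isT) /andP[_ h3].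
  by have := eta_ge0; lra.
case: n n0 h1 => // m _ h1.
have s1 : 0 <= 1 + t <= 1 by apply/andP; split; lra.
have := G_step m%:R th s1; rewrite (_ : m%:R + (1 + t) = t + m.+1%:R); last first.
  by rewrite -natr1; ring.
rewrite ler_norml => /andP[_ h3].
have := G_step m%:R th (s := 1).
rewrite ler01 lexx natr1 ler_norml => /(_ isT) /andP[h4 _].
by have := eta_ge0; lra.
Qed.

Definition growth_below (q : R) : set T :=
  \bigcup_j \bigcup_k \bigcap_(n in [set n | (k <= n)%N])
    [set th | G n%:R th <= n%:R * (q - j.+1%:R^-1)].

Lemma growth_belowP q th : growth_below q th <->
  exists j k, forall n, (k <= n)%N -> G n%:R th <= n%:R * (q - j.+1%:R^-1).
Proof.
split=> [[j _ [k _ hk]]|[j [k hk]]]; first by exists j, k.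
by exists j => //; exists k.
Qed.

Lemma measurable_growth_below q : measurable (growth_below q).
Proof.
do 2 apply: bigcupT_measurable => ?; apply: bigcap_measurableType => n _.
by rewrite -[X in measurable X]setTI; apply: measurable_fun_le.
Qed.

Lemma le_growth_below q q' : q <= q' -> growth_below q `<=` growth_below q'.
Proof.
move=> qq' th /growth_belowP[j [k hk]]; apply/growth_belowP; exists j, k => n kn.
by apply: le_trans (hk n kn) _; rewrite ler_wpM2l // lerD2r.
Qed.

Lemma growth_below_shift1 q (t : R) th : -1 <= t <= 1 ->
  growth_below q th -> growth_below q (w t th).
Proof.
move=> /(quasi_cocycle_shift th)[c hc] /growth_belowP[j [k hk]].
exact/growth_belowP/(rate_margin_perturb hc hk).
Qed.

Lemma growth_below_shift q t th : growth_below q th -> growth_below q (w t th).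
Proof.
suff shift n : forall (s : R) th, - n.+1%:R <= s <= n.+1%:R ->
    growth_below q th -> growth_below q (w s th).
  apply: (shift (Num.bound `|t|)).
  have := archi_boundP (normr_ge0 t); rewrite ltr_norml -natr1 => /andP[h1 h2].
  by apply/andP; split; lra.
elim: n => [|n IH] s {}th; first exact: growth_below_shift1.
rewrite -[n.+2%:R]natr1 => /andP[s1 s2] hth.
have n1 : 1 <= n.+1%:R :> R by rewrite ler1n.
have [s0|s0] := lerP 0 s.
  rewrite -(subrK 1 s) wD; apply: growth_below_shift1; first by apply/andP; split; lra.
  by apply: IH => //; apply/andP; split; lra.
rewrite -(addrK 1 s) wD; apply: growth_below_shift1; first by apply/andP; split; lra.
by apply: IH => //; apply/andP; split; lra.
Qed.

Lemma growth_below_invariant q t : w t @^-1` growth_below q = growth_below q.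
Proof.
apply/seteqP; split=> th /=; last exact: growth_below_shift.
by move=> /(growth_below_shift (- t)); rewrite -wD subrr w0.
Qed.

Lemma growth_below_01 q : mu (growth_below q) = 0%E \/ mu (growth_below q) = 1%E.
Proof.
exact/w_ergodic/growth_below_invariant/measurable_growth_below.
Qed.

Lemma growth_below_top : growth_below (2 * eta + 2) = setT.
Proof.
apply/seteqP; split=> // th _; apply/growth_belowP; exists 0%N, 1%N => n n1.
have := quasi_cocycle_nat_bound n th; rewrite ler_norml => /andP[_].
have : 1 <= n%:R :> R by rewrite ler1n.
by rewrite invr1 -natr1; have := eta_ge0; nra.
Qed.

Lemma growth_below_bot : growth_below (- (2 * eta)) = set0.
Proof.
apply/seteqP; split=> // th /growth_belowP[j [k hk]].
have := hk (maxn k 1) (leq_maxl _ _).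
have := quasi_cocycle_nat_bound (maxn k 1) th; rewrite ler_norml => /andP[+ _].
have : 1 <= (maxn k 1)%:R :> R by rewrite ler1n leq_maxr.
have : 0 < j.+1%:R^-1 :> R by rewrite invr_gt0 ltr0n.
rewrite -natr1; set x := ((maxn k 1)%:R : R); set e := (j.+1%:R^-1 : R).
by have := eta_ge0; nra.
Qed.

Lemma exists_growth_rate : exists L : R,
  (forall q, L < q -> mu (growth_below q) = 1%E) /\
  (forall q, q < L -> mu (growth_below q) = 0%E).
Proof.
pose S := [set q | mu (growth_below q) = 1%E].
have mu_le q q' : q <= q' -> (mu (growth_below q) <= mu (growth_below q'))%E.
  move=> /le_growth_below; apply: le_measure; rewrite inE;
  exact: measurable_growth_below.
have S_top : S (2 * eta + 2) by rewrite /S /= growth_below_top probability_setT.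
have S_lb q : S q -> - (2 * eta) < q.
  rewrite /S /= ltNge => Sq; apply/negP => /mu_le.
  by rewrite Sq growth_below_bot measure0 lee_fin ler10.
have S_hasl : has_lbound S by exists (- (2 * eta)) => q /S_lb /ltW.
exists (inf S); split=> q hq.
  have [y Sy yq] := inf_lt (ex_intro _ _ S_top) hq.
  case: (growth_below_01 q) => // q0.
  by have := mu_le _ _ (ltW yq); rewrite Sy q0 lee_fin ler10.
case: (growth_below_01 q) => // q1.
by have := ge_inf S_hasl q1; rewrite leNgt hq.
Qed.

Definition slow_window (q : R) (k N : nat) : set T :=
  \bigcap_(n in [set n | (k <= n <= N)%N]) [set th | G n%:R th <= n%:R * q].

Lemma measurable_slow_window q k N : measurable (slow_window q k N).
Proof.
apply: bigcap_measurableType => n _.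
by rewrite -[X in measurable X]setTI; apply: measurable_fun_le.
Qed.

Lemma slow_window_small (q q' : R) (k : nat) (delta : R) :
  q < q' -> mu (growth_below q') = 0%E -> 0 < delta ->
  exists2 N, (k <= N)%N & (mu (slow_window q k N) < delta%:E)%E.
Proof.
move=> qq' q'0 delta0; pose F N := slow_window q k (k + N).
have mF N : measurable (F N) by exact: measurable_slow_window.
have F_nonincr : {homo F : n m / (n <= m)%N >-> (m <= n)%O}.
  move=> n m nm; apply/subsetPset => th Fth i /andP[ki im]; apply: Fth.
  by rewrite /= ki (leq_trans im) // leq_add2l.
have [j hj] : exists j, 1 / j.+1%:R <= q' - q by apply: exists_divn_le; rewrite subr_gt0.
have cap0 : mu (\bigcap_N F N) = 0%E.
  apply/eqP; rewrite -measure_le0 -q'0; apply: le_measure; rewrite ?inE.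
  - exact: bigcapT_measurable.
  - exact: measurable_growth_below.
  move=> th Fth; apply/growth_belowP; exists j, k => n kn.
  have := Fth (n - k)%N I n; rewrite /= subnKC // kn leqnn => /(_ isT) /le_trans; apply.
  by rewrite ler_wpM2l //; move: hj; rewrite div1r; set e := (j.+1%:R^-1 : R); lra.
have F0_fin : (mu (F 0%N) < +oo)%E.
  by apply: le_lt_trans (probability_le1 mu (mF 0%N)) _; rewrite ltey.
have := nonincreasing_cvg_mu F0_fin mF (bigcapT_measurable mF) F_nonincr.
rewrite (_ : _ (\bigcap_N F N) = 0%E) //.
move=> /fine_cvgP[Ffin /cvgrPdist_lt /(_ _ delta0) Fnear].
have [N [FN_fin FN]] := filter_ex (filterI Ffin Fnear).
exists (k + N)%N; first exact: leq_addr.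
move: FN_fin FN; rewrite /= sub0r normrN => FN_fin.
by rewrite -(fineK FN_fin) lte_fin; apply: le_lt_trans; exact: ler_norm.
Qed.

Lemma quasi_cocycle_cover q (k N M : nat) th (B : set T) :
  (0 < k)%N -> (k <= N)%N -> slow_window q k N `<=` B ->
  G 0 th + (q - D / k%:R) * M%:R
    - (`|q - D / k%:R| + 2 * eta + D) * \sum_(i < M) \1_B (w i%:R th)
    - ((`|q - D / k%:R| + eta) * N%:R + eta + D) <= G M%:R th.
Proof.
move=> k0 kN windowB.
apply: (@greedy_cover_bound _ (fun n => G n%:R th) (fun j n => G n%:R (w j%:R th))
  (fun j => \1_B (w j%:R th))) => //.
- move=> j n; have := G_add j%:R n%:R th; rewrite ler_norml natrD => /andP[h _].
  by have := D_ge0; lra.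
- move=> j n; have := quasi_cocycle_nat_bound n (w j%:R th).
  by rewrite ler_norml => /andP[].
- by move=> j; rewrite /indic; case: (_ \in _); [right | left].
move=> j /eqP; rewrite indicE pnatr_eq0 eqb0 notin_setE => /(contra_not (windowB _)).
move=> /existsNP[n /not_implyP[kn /negP]]; rewrite -ltNge => /ltW.
by exists n.
Qed.

Lemma growth_below_le q th : growth_below q th ->
  exists k, forall n, (k <= n)%N -> G n%:R th <= n%:R * q.
Proof.
move=> /growth_belowP[j [k hk]]; exists k => n /hk /le_trans; apply.
by rewrite ler_wpM2l // gerBl invr_ge0.
Qed.

End quasi_cocycle_growth.

Section growth_rates.
Context (R : realType) (d : measure_display) (T : measurableType d).
Variables (mu : probability T R) (w : R -> T -> T) (D eta : R) (G : R -> T -> R).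
Hypothesis w_measurable : forall t, measurable_fun setT (w t).
Hypothesis w_preserving : forall t A, measurable A -> mu (w t @^-1` A) = mu A.
Hypothesis D_ge0 : 0 <= D.
Hypothesis eta_ge0 : 0 <= eta.
Hypothesis G_cocycle : quasi_cocycle w D eta G.
Hypothesis G_measurable : forall t, measurable_fun setT (G t).

Let Gn t th := - G t th.

Let Gn_cocycle : quasi_cocycle w D eta Gn.
Proof. exact: quasi_cocycleN. Qed.

Let Gn_measurable t : measurable_fun setT (Gn t).
Proof. exact: measurable_funN. Qed.

Lemma growth_rates_bound (q1 q1' q2 q2' beta : R) (k : nat) :
  q1 < q1' -> mu (growth_below G q1') = 0%E ->
  q2 < q2' -> mu (growth_below Gn q2') = 0%E ->
  (0 < k)%N -> 0 < beta ->
  (q1 - D / k%:R) + (q2 - D / k%:R) <= 2 * beta *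
    ((`|q1 - D / k%:R| + 2 * eta + D) + (`|q2 - D / k%:R| + 2 * eta + D)).
Proof.
move=> q11 G0 q22 Gn0 k0 beta0.
set al1 := q1 - D / k%:R; set al2 := q2 - D / k%:R.
set c1 := (`|al1| + 2 * eta + D : R); set c2 := (`|al2| + 2 * eta + D : R).
have beta20 : 0 < beta / 2 by rewrite divr_gt0.
have [N1 kN1 B1_small] := slow_window_small G_measurable k q11 G0 beta20.
have [N2 kN2 B2_small] := slow_window_small Gn_measurable k q22 Gn0 beta20.
set B1 := slow_window G q1 k N1; set B2 := slow_window Gn q2 k N2.
have mB1 : measurable B1 := measurable_slow_window G_measurable q1 k N1.
have mB2 : measurable B2 := measurable_slow_window Gn_measurable q2 k N2.
have mB : measurable (B1 `|` B2) by exact: measurableU.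
have B_small : (mu (B1 `|` B2) <= beta%:E)%E.
  apply: le_trans (measureU2 mu mB1 mB2) _.
  by rewrite (splitr beta) EFinD; apply/ltW/lteD.
apply: (le_of_linear_le (K := (`|al1| + eta) * N1%:R + eta + D
  + ((`|al2| + eta) * N2%:R + eta + D))) => M M0.
have [th th_few] := exists_orbit_few_visits w_measurable w_preserving mB B_small beta0 M0.
have cov1 := quasi_cocycle_cover D_ge0 eta_ge0 G_cocycle M th k0 kN1 (@subsetUl _ B1 B2).
have cov2 := quasi_cocycle_cover D_ge0 eta_ge0 Gn_cocycle M th k0 kN2 (@subsetUr _ B1 B2).
set S := \sum_(i < M) _ in th_few cov1 cov2.
have cS : (c1 + c2) * S <= (c1 + c2) * (2 * beta * M%:R).
  by rewrite ler_wpM2l // addr_ge0 // !addr_ge0 ?mulr_ge0.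
(* Adding the two covering bounds cancels G_0 and G_M. *)
rewrite /Gn in cov2; rewrite -/al1 -/al2 -/c1 -/c2 in cov1 cov2 *.
lra.
Qed.

Lemma growth_rates_sum_le (L1 L2 : R) :
  (forall q, q < L1 -> mu (growth_below G q) = 0%E) ->
  (forall q, q < L2 -> mu (growth_below Gn q) = 0%E) ->
  L1 + L2 <= 0.
Proof.
move=> L1_0 L2_0; apply/ler_addgt0Pr => e e0; rewrite add0r.
have e8 : 0 < e / 8 by rewrite divr_gt0.
have [n Dn] := exists_divn_le D e8.
have q11 : L1 - e / 4 < L1 - e / 8 by lra.
have q22 : L2 - e / 4 < L2 - e / 8 by lra.
set c := (`|L1 - e / 4 - D / n.+1%:R| + 2 * eta + D
  + (`|L2 - e / 4 - D / n.+1%:R| + 2 * eta + D) : R).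
have c0 : 0 <= c by rewrite !addr_ge0 ?mulr_ge0.
have c1 : 0 < c + 1 by lra.
have beta0 : 0 < e / (8 * (c + 1)) by rewrite divr_gt0 // mulr_gt0.
have L1e : L1 - e / 8 < L1 by lra.
have L2e : L2 - e / 8 < L2 by lra.
have := growth_rates_bound q11 (L1_0 _ L1e) q22 (L2_0 _ L2e) (ltn0Sn n) beta0.
rewrite -/c; have : 2 * (e / (8 * (c + 1))) * c <= e / 4.
  have -> : e / 4 = 2 * (e / (8 * (c + 1))) * (c + 1) by field; rewrite gt_eqF.
  by apply: ler_wpM2l; [rewrite mulr_ge0 // ltW | lra].
by move: Dn; set r := (D / n.+1%:R : R); lra.
Qed.

Definition regular_set (L : R) : set T :=
  \bigcap_j (growth_below G (L + j.+1%:R^-1) `&` growth_below Gn (- L + j.+1%:R^-1)).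

Lemma measurable_regular_set L : measurable (regular_set L).
Proof.
by apply: bigcapT_measurable => j; apply: measurableI; exact: measurable_growth_below.
Qed.

Lemma regular_set_eq1 (L1 L2 : R) :
  (forall q, L1 < q -> mu (growth_below G q) = 1%E) ->
  (forall q, L2 < q -> mu (growth_below Gn q) = 1%E) ->
  L1 + L2 <= 0 -> mu (regular_set L1) = 1%E.
Proof.
move=> L1_1 L2_1 L12; apply: probability_bigcap_eq1 => j.
  by apply: measurableI; exact: measurable_growth_below.
apply: probability_setI_eq1; try exact: measurable_growth_below.
  by apply: L1_1; rewrite ltrDl invr_gt0 ltr0n.
apply: L2_1; apply: (@le_lt_trans _ _ (- L1)); first lra.
by rewrite ltrDl invr_gt0 ltr0n.
Qed.

Lemma regular_set_rate L th : regular_set L th -> forall e, 0 < e ->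
  exists k, forall n, (k <= n)%N -> `|G n%:R th - n%:R * L| <= n%:R * e.
Proof.
move=> th_reg e e0; have [j je] : exists j, 1 / j.+1%:R <= e by exact: exists_divn_le.
have [/growth_below_le[k1 hk1] /growth_below_le[k2 hk2]] := th_reg j I.
exists (maxn k1 k2) => n; rewrite geq_max => /andP[/hk1 h1 /hk2 h2].
have : n%:R * j.+1%:R^-1 <= n%:R * e :> R by rewrite ler_wpM2l // -div1r.
rewrite /Gn ler_norml in h2 *; move: h1 h2; set f := (j.+1%:R^-1 : R).
by rewrite !mulrDr mulrN; lra.
Qed.

End growth_rates.

Lemma measurable_psi_section (R : realType) (d : measure_display) (T : measurableType d)
    (w : R -> T -> T) (psi : R -> T -> R -> R) :
  measurable_fun setT (fun p : R * T * R => (w p.1.1 p.1.2, psi p.1.1 p.1.2 p.2)) ->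
  forall t x, measurable_fun setT (fun th => psi t th x).
Proof.
move=> Psi_meas t x; have psi_meas := measurableT_comp measurable_snd Psi_meas.
have section_meas : measurable_fun setT (fun th : T => ((t, th), x)).
  by apply: measurable_fun_pair => //; exact: measurable_fun_pair.
exact: measurableT_comp psi_meas section_meas.
Qed.

Theorem theorem3p1 (R : realType) (d : measure_display) (T : measurableType d)
  (mu : probability T R) (w : R -> T -> T) (psi : R -> T -> R -> R)
  (C eta : R) :
  ergodic_mds mu w ->
  measurable_fun setT (fun p : R * T * R => (w p.1.1 p.1.2, psi p.1.1 p.1.2 p.2)) ->
  (forall t1 t2 th x, psi (t1 + t2) th x = psi t2 (w t1 th) (psi t1 th x)) ->
  (forall t th x, psi t th (x + 1) = psi t th x + 1) ->
  0 <= C ->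
  (forall t th x x', x <= x' -> psi t th x <= psi t th x' + C) ->
  0 <= eta ->
  (forall t th x, 0 <= t <= 1 -> `|psi t th x - x| <= eta) ->
  exists (rho : R) (Theta0 : set T),
    [/\ measurable Theta0, mu Theta0 = 1%E &
        forall th x, Theta0 th ->
          (psi t th x - x) / t @[t --> +oo] --> rho].
Proof.
move=> [[w_meas w0 wD w_pres] w_erg] Psi_meas cocycle add1 C0 quasi_mono eta0 small_time.
pose G t th := psi t th 0.
have G_cocycle : quasi_cocycle w (C + 1) eta G.
  exact: displacement_quasi_cocycle cocycle add1 quasi_mono small_time.
have G_meas t : measurable_fun setT (G t) by exact: measurable_psi_section Psi_meas t 0.
have Gn_meas t : measurable_fun setT (fun th => - G t th) by exact: measurable_funN.
have wt_meas t : measurable_fun setT (w t) by exact: measurable_fun_pair2 t w_meas.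
have D0 : 0 <= C + 1 by lra.
have [L1 [L1_1 L1_0]] := exists_growth_rate w0 wD eta0 G_cocycle G_meas w_erg.
have [L2 [L2_1 L2_0]] :=
  exists_growth_rate w0 wD eta0 (quasi_cocycleN G_cocycle) Gn_meas w_erg.
have L12 := growth_rates_sum_le wt_meas w_pres D0 eta0 G_cocycle G_meas L1_0 L2_0.
exists L1, (regular_set G L1); split.
- exact: measurable_regular_set.
- exact: regular_set_eq1 L1_1 L2_1 L12.
move=> th x th_reg; apply: (@cvg_ratio_of_nat_rate _ _ (G^~ th) _ (C + 1) eta).
- by move=> t; exact: (lift_displacement (add1 t th) (quasi_mono t th)).
- by move=> m s s01; rewrite /G cocycle; exact: small_time.
- exact: regular_set_rate th_reg.
Qed.
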